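(* Let $V$ be a finite-dimensional real vector space, let $T_1,\dots,T_n\in V^*$ be linearly independent, and let $Q$ be a quadratic form on $V$ which is not identically zero on $\bigcap_{i=1}^n\ker(T_i)$. If $F\in\mathbb{R}[z_0,\dots,z_n]$ is a polynomial such that the function $V\to\mathbb{R}$, $v\mapsto F(Q(v),T_1(v),\dots,T_n(v))$, is identically zero, then $F$ is the zero polynomial. *)

From HB Require Import structures.
From mathcomp Require Import all_boot all_order all_algebra.
From mathcomp Require Import reals.
From mathcomp Require Import mpoly.

Set Implicit Arguments.
Unset Strict Implicit.
Unset Printing Implicit Defensive.

Import Order.TTheory GRing.Theory Num.Theory.
Local Open Scope ring_scope.

Definition is_quadratic_form (R : realType) (V : vectType R) (Q : V -> R) : Prop :=
  exists B : V -> V -> R,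
    [/\ (forall u v, B u v = B v u),
        (forall (a : R) (u w v : V), B (a *: u + w) v = a * B u v + B w v)
      & (forall v, Q v = B v v)].

Definition lin_indep_functionals (R : realType) (V : vectType R) (n : nat)
    (T : 'I_n -> {linear V -> R^o}) : Prop :=
  forall c : 'I_n -> R,
    (forall v : V, \sum_(i < n) c i * T i v = 0) -> forall i, c i = 0.

Definition QT_point (R : realType) (V : vectType R) (n : nat)
    (Q : V -> R) (T : 'I_n -> {linear V -> R^o}) (v : V) : 'I_n.+1 -> R :=
  fun i => match unlift ord0 i with None => Q v | Some j => T j v end.

(* Fix t in R^n.  By independence of the T_i there is w with T_i w = t_i for
   all i, and along the line s |-> s v0 + w, where v0 lies in every ker T_i
   and Q v0 <> 0, the T-coordinates stay equal to t while Q runs through the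
   values of a polynomial of degree 2.  So the univariate polynomial
   x |-> F(x, t) vanishes on the range of a nonconstant polynomial, hence is
   zero.  Thus F vanishes on all of R^(n+1), and a polynomial vanishing
   everywhere over an infinite domain is zero. *)

From HB Require Import structures.
From mathcomp Require Import all_boot all_order all_algebra.
From mathcomp Require Import reals.
From mathcomp Require Import mpoly.
From mathcomp Require Import ring.
Set Implicit Arguments.
Unset Strict Implicit.
Unset Printing Implicit Defensive.

Import GRing.Theory Num.Theory.
Local Open Scope ring_scope.

Section PolyNumDomain.
Variable R : numDomainType.
Implicit Types p r : {poly R}.

Lemma poly_eval_eq0 p : (forall x, p.[x] = 0) -> p = 0.
Proof.
move=> p0; apply: (@roots_geq_poly_eq0 _ _ [seq i%:R | i <- iota 0 (size p)]).
- by apply/allP => x _; rewrite /root p0.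
- by rewrite map_inj_uniq ?iota_uniq // => i j /eqP; rewrite eqr_nat => /eqP.
- by rewrite size_map size_iota.
Qed.

Lemma comp_poly_eval_eq0 p r :
  (1 < size r)%N -> (forall s, p.[r.[s]] = 0) -> p = 0.
Proof.
move=> r_nonconst pr0; apply/eqP; rewrite -(comp_poly_eq0 _ r_nonconst).
by apply/eqP/poly_eval_eq0 => s; rewrite horner_comp.
Qed.

End PolyNumDomain.

Section HeadVariable.
Variables (R : comNzRingType) (k : nat).

Definition cons_pt (x : R) (t : 'I_k -> R) : 'I_k.+1 -> R :=
  fun i => if unlift ord0 i is Some j then t j else x.

Lemma cons_pt_eta (v : 'I_k.+1 -> R) : cons_pt (v ord0) (v \o lift ord0) =1 v.
Proof. by move=> i; rewrite /cons_pt; case: unliftP => [j|] ->. Qed.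

Definition mtail (m : 'X_{1..k.+1}) : 'X_{1..k} := [multinom m (lift ord0 j) | j < k].

Lemma eq_mnm_head_tail (m m' : 'X_{1..k.+1}) :
  (m == m') = (m ord0 == m' ord0) && (mtail m == mtail m').
Proof.
apply/eqP/andP => [-> // | [/eqP eq0 /eqP eq_tail]].
apply/mnmP => i; case: (unliftP ord0 i) => [j ->|-> //].
by have /mnmP/(_ j) := eq_tail; rewrite !mnmE.
Qed.

Lemma mpoly_head_decomp (F : {mpoly R[k.+1]}) :
  exists G : nat -> {mpoly R[k]},
    (forall m, F@_m = (G (m ord0))@_(mtail m)) /\
    (forall t, exists2 p : {poly R},
       forall x, F.@[cons_pt x t] = p.[x] & forall e, p`_e = (G e).@[t]).
Proof.
elim/mpolyind: F => [|c m F _ _ [G [coefG evalG]]].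
  exists (fun _ => 0); split => [m|t]; first by rewrite !mcoeff0.
  by exists 0 => [x|e]; rewrite ?meval0 ?horner0 ?coef0.
pose Gm e := if e == m ord0 then c *: 'X_[mtail m] else 0.
exists (fun e => Gm e + G e); split => [m'|t].
  rewrite !mcoeffD coefG mcoeffZ mcoeffX eq_mnm_head_tail /Gm (eq_sym (m ord0)).
  by case: eqP => _; rewrite ?mcoeffZ ?mcoeffX ?mcoeff0 ?mulr0.
have [p evalp coefp] := evalG t.
pose c_t := c * \prod_(j < k) t j ^+ m (lift ord0 j).
exists (c_t *: 'X^(m ord0) + p) => [x|e].
  rewrite mevalD mevalZ mevalX hornerD hornerZ hornerXn evalp big_ord_recl.
  rewrite /cons_pt unlift_none; under eq_bigr => j _ do rewrite liftK.
  by rewrite mulrCA mulrC.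
rewrite coefD coefZ coefXn coefp mevalD /Gm; congr (_ + _).
case: eqP => _; last by rewrite meval0 mulr0.
by rewrite mevalZ mevalX mulr1; congr (_ * _); apply: eq_bigr => j _; rewrite mnmE.
Qed.

End HeadVariable.

Lemma mpoly_eval_eq0 (R : numDomainType) k (F : {mpoly R[k]}) :
  (forall t, F.@[t] = 0) -> F = 0.
Proof.
elim: k F => [|k IH] F F0.
  have F_const : F = (F@_0%MM)%:MP.
    apply/mpolyP => m; rewrite mcoeffC (_ : m = 0%MM) ?eqxx ?mulr1 //.
    by apply/mnmP; case.
  by move: (F0 (fun _ => 0)); rewrite F_const mevalC => ->.
have [G [coefG evalG]] := mpoly_head_decomp F.
suff G0 e : G e = 0 by apply/mpolyP => m; rewrite coefG G0 !mcoeff0.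
apply: IH => t; have [p evalp <-] := evalG t.
by rewrite (@poly_eval_eq0 _ p) ?coef0 // => x; rewrite -evalp F0.
Qed.

Lemma lin_indep_functionals_onto (R : realType) (V : vectType R) n
    (T : 'I_n -> {linear V -> R^o}) :
  lin_indep_functionals T ->
  forall t : 'I_n -> R, exists w : V, forall j, T j w = t j.
Proof.
move=> indepT t; pose e := vbasis {:V}.
pose M := \matrix_(j < n, i < \dim {:V}) T j e`_i.
have M_free : row_free M.
  apply: inj_row_free => c cM0; apply/rowP => j; rewrite mxE.
  have cM0_at (i : 'I_(\dim {:V})) : \sum_j c 0 j * T j e`_i = 0.
    apply: etrans (_ : (c *m M) 0 i = 0); last by rewrite cM0 mxE.
    by rewrite mxE; apply: eq_bigr => l _; rewrite mxE.
  apply: (indepT (fun j => c 0 j)) => v; rewrite (coord_vbasis (memvf v)).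
  under eq_bigr do rewrite linear_sum mulr_sumr.
  rewrite exchange_big big1 // => i _.
  under eq_bigr do rewrite linearZ /= mulrCA.
  by rewrite -mulr_sumr cM0_at mulr0.
have MT_full : row_full M^T by rewrite /row_full mxrank_tr.
have /submxP[u tu] := submx_full (\row_j t j) MT_full.
exists (\sum_i u 0 i *: e`_i) => j.
have /rowP/(_ j) := tu; rewrite !mxE => ->; rewrite linear_sum.
by apply: eq_bigr => i _; rewrite linearZ !mxE.
Qed.

Lemma quadratic_form_line (R : realType) (V : vectType R) (Q : V -> R) (v w : V) :
  is_quadratic_form Q -> Q v != 0 ->
  exists2 r : {poly R}, size r = 3 & forall s, Q (s *: v + w) = r.[s].
Proof.
move=> [B [B_sym B_lin BQ]] Qv0.
exists (Poly [:: Q w; B v w + B w v; Q v]).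
  by rewrite (PolyK (c := 1)) ?Qv0.
move=> s; rewrite horner_Poly /= !BQ B_lin (B_sym v) (B_sym w) !B_lin.
ring.
Qed.

Theorem lemma4p1 (R : realType) (V : vectType R) (n : nat)
    (T : 'I_n -> {linear V -> R^o}) (Q : V -> R) (F : {mpoly R[n.+1]}) :
  lin_indep_functionals T ->
  is_quadratic_form Q ->
  (exists v : V, (forall i, T i v = 0) /\ Q v != 0) ->
  (forall v : V, F.@[QT_point Q T v] = 0) ->
  F = 0.
Proof.
move=> indepT quadQ [v0 [Tv0 Qv0]] FQT0.
have F0 x t : F.@[cons_pt x t] = 0.
  have [w Tw] := lin_indep_functionals_onto indepT t.
  have [r size_r Qline] := quadratic_form_line w quadQ Qv0.
  have [_ [_ /(_ t)[p evalp _]]] := mpoly_head_decomp F.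
  rewrite evalp; suff -> : p = 0 by rewrite horner0.
  apply: (@comp_poly_eval_eq0 _ p r); first by rewrite size_r.
  move=> s; rewrite -Qline -evalp -(FQT0 (s *: v0 + w)); apply: meval_eq => i.
  rewrite /cons_pt /QT_point; case: unlift => // j.
  by rewrite linearP /= Tv0 Tw scaler0 add0r.
apply: mpoly_eval_eq0 => v; rewrite -(meval_eq F (cons_pt_eta v)); exact: F0.
Qed.
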